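(* Let $(a_d)_{d\in\mathbb N}$ be a real sequence and $(b_d)_{d\in\mathbb N}$ a positive sequence with $b_d\to\infty$. Let $q:(0,1)\to\mathbb R$ be non-increasing and let $G$ be a distribution function such that $q(\varepsilon)=G^{-1}(1-\varepsilon^2)$ for all $\varepsilon\in C(q)$. Then $$\ln n^{X_d}(\varepsilon)=a_d+q(\varepsilon)b_d+o(b_d),\quad d\to\infty,\quad\text{for all }\varepsilon\in C(q)$$ holds if and only if $G^{X_d}_{a_d,b_d}$ converges weakly to $G$, i.e. $\lim_{d\to\infty}G^{X_d}_{a_d,b_d}(x)=G(x)$ for all $x\in C(G)$, where $$G^{X_d}_{a_d,b_d}(x)=\sum_{k=1}^\infty\bar\lambda^{X_d}_k\,\mathbf 1\bigl(\bar\lambda^{X_d}_k\ge e^{-a_d-xb_d}\bigr),\quad x\in\mathbb R.$$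
   Context: For each $d\in\mathbb N$, $X_d$ is a random element of a separable Hilbert space $H_d$ with $\mathbb E X_d=0$ and $\mathbb E\|X_d\|_{H_d}^2<\infty$. For a centered Hilbert-space random element $Z$ with finite second moment, $\lambda^Z_1\ge\lambda^Z_2\ge\dots\ge 0$ denote the eigenvalues of its covariance operator listed with multiplicity (padded with zeros if there are finitely many), $\Lambda^Z=\sum_k\lambda^Z_k=\mathbb E\|Z\|^2$, and $\bar\lambda^Z_k=\lambda^Z_k/\Lambda^Z$. It is assumed that $\lambda^{X_d}_1>0$ for all $d$. The average case approximation complexity is $n^{X_d}(\varepsilon)=\min\{n\in\mathbb N: e^{X_d}(n)\le \varepsilon\, e^{X_d}(0)\}$ for $\varepsilon\in(0,1)$, where $e^{X_d}(0)=(\mathbb E\|X_d\|^2)^{1/2}$ and $e^{X_d}(n)$ is the infimum of $(\mathbb E\|X_d-\sum_{m=1}^n l_m(X_d)\psi_m\|^2)^{1/2}$ over all $\psi_m\in H_d$, $l_m\in H_d^*$; equivalently $n^{X_d}(\varepsilon)=\min\{n\in\mathbb N:\ \sum_{k>n}\bar\lambda^{X_d}_k\le\varepsilon^2\}$. A distribution function is a non-decreasing right-continuous $F:\mathbb R\to[0,1]$ with limits $0$ at $-\infty$ and $1$ at $+\infty$. For a function $f$, $C(f)$ denotes its set of continuity points and $f^{-1}(y)=\inf\{x\in\mathbb R: f(x)\ge y\}$ its generalized inverse. $\mathbf 1(A)$ is the indicator of $A$. *)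

From Stdlib Require Export Reals Lra ClassicalEpsilon.
Open Scope R_scope.

Definition infsum (f : nat -> R) : R :=
  epsilon (inhabits 0) (fun l => infinite_sum f l).

(* Eigenvalue data of a centered Hilbert-space random element with finite
   second moment: lam k = lambda_{k+1} (0-indexed), nonnegative,
   non-increasing, summable, lambda_1 > 0. *)
Definition eigen_seq (lam : nat -> R) : Prop :=
  (forall k, 0 <= lam k) /\ (forall k, lam (S k) <= lam k) /\
  0 < lam 0%nat /\ exists l, infinite_sum lam l.

Definition Lambda (lam : nat -> R) : R := infsum lam.

Definition lbar (lam : nat -> R) (k : nat) : R := lam k / Lambda lam.

(* sum_{k > n} bar lambda_k  (1-indexed), i.e. sum_{j>=0} lbar (n+j) 0-indexed *)
Definition tailsum (lam : nat -> R) (n : nat) : R :=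
  infsum (fun j => lbar lam (n + j)).

Definition ncompl (lam : nat -> R) (eps : R) : nat :=
  epsilon (inhabits 0%nat)
    (fun n => (1 <= n)%nat /\ tailsum lam n <= eps ^ 2 /\
       forall m, (1 <= m)%nat -> (m < n)%nat -> eps ^ 2 < tailsum lam m).

Definition GX (lam : nat -> R) (a b x : R) : R :=
  infsum (fun k => lbar lam k *
    (if Rle_dec (exp (- a - x * b)) (lbar lam k) then 1 else 0)).

Definition distribution_function (F : R -> R) : Prop :=
  (forall x y, x <= y -> F x <= F y) /\
  (forall x, 0 <= F x <= 1) /\
  (forall x e, 0 < e -> exists d, 0 < d /\
       forall y, x <= y < x + d -> Rabs (F y - F x) < e) /\
  (forall e, 0 < e -> exists M, forall x, x <= M -> Rabs (F x) < e) /\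
  (forall e, 0 < e -> exists M, forall x, M <= x -> Rabs (F x - 1) < e).

Definition is_glb (S : R -> Prop) (m : R) : Prop :=
  (forall x, S x -> m <= x) /\ (forall m', (forall x, S x -> m' <= x) -> m' <= m).

Definition geninv (f : R -> R) (y : R) : R :=
  epsilon (inhabits 0) (fun m => is_glb (fun x => y <= f x) m).

Definition Cq (q : R -> R) (eps : R) : Prop :=
  0 < eps < 1 /\ continuity_pt q eps.

(* For a threshold t = exp (- a - x b) and n = n(eps), G^X_{a,b}(x) is the normalised
   eigenvalue mass above t, and two elementary inequalities tie it to the complexity:
   1 - eps^2 - n t <= G^X_{a,b}(x), because each of the first n eigenvalues missing from that
   mass is below t; and G^X_{a,b}(x) > 1 - eps^2 forces n t <= 1, because all eigenvalues
   >= t lie among the first 1/t and, by minimality of n, fewer than n eigenvalues carry less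
   than 1 - eps^2.  Both sides of the equivalence thus amount to the sign of
   ln n - a - x b on the scale b, i.e. to the position of x relative to the quantile
   q(eps) = G^{-1}(1 - eps^2).  Continuity points of the monotone functions q and G are
   dense, which is what allows passing between levels eps and abscissae x. *)

From Stdlib Require Import Reals Lra Lia Classical Wf_nat.
From Coquelicot Require Import Hierarchy.
Open Scope R_scope.

Lemma infsum_eq f l : infinite_sum f l -> infsum f = l.
Proof.
  intros H. exact (uniqueness_sum _ _ _ (epsilon_spec (inhabits 0) _ (ex_intro _ l H)) H).
Qed.

Lemma Un_cv_const c : Un_cv (fun _ => c) c.
Proof. intros e He. exists 0%nat. intros n _. unfold Rdist. rewrite Rminus_diag, Rabs_R0. lra. Qed.

(* [psum f n] sums the first [n] terms, whereas [sum_f_R0 f n] sums [n + 1]. *)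
Fixpoint psum (f : nat -> R) (n : nat) : R :=
  match n with O => 0 | S m => psum f m + f m end.

Lemma psum_S f n : psum f (S n) = sum_f_R0 f n.
Proof. induction n as [|n IH]; simpl in *; [lra | rewrite <- IH; reflexivity]. Qed.

Lemma infinite_sum_psum f l : infinite_sum f l <-> Un_cv (psum f) l.
Proof.
  split; intros H.
  - apply CV_shift with 1%nat. apply Un_cv_ext with (sum_f_R0 f); [|exact H].
    intros n. rewrite Nat.add_1_r. symmetry. apply psum_S.
  - apply (CV_shift' _ 1) in H. apply Un_cv_ext with (2 := H).
    intros n. rewrite Nat.add_1_r. apply psum_S.
Qed.

Lemma psum_le f g n : (forall k, f k <= g k) -> psum f n <= psum g n.
Proof. intros H. induction n as [|n IH]; simpl; [lra|]. specialize (H n). lra. Qed.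

Lemma psum_le_infinite_sum f l n : (forall k, 0 <= f k) -> infinite_sum f l -> psum f n <= l.
Proof.
  intros Hf Hl. apply growing_ineq; [|apply infinite_sum_psum; exact Hl].
  intros m. simpl. specialize (Hf m). lra.
Qed.

Lemma infinite_sum_le f g lf lg :
  (forall k, f k <= g k) -> infinite_sum f lf -> infinite_sum g lg -> lf <= lg.
Proof.
  intros H Hf Hg. apply (Rle_cv_lim (Un := psum f) (Vn := psum g)).
  - intros n. apply psum_le, H.
  - apply infinite_sum_psum, Hf.
  - apply infinite_sum_psum, Hg.
Qed.

Lemma infinite_sum_div f l c : infinite_sum f l -> infinite_sum (fun k => f k / c) (l / c).
Proof.
  intros H. apply infinite_sum_psum.
  apply Un_cv_ext with (fun n => psum f n * / c).
  - intros n. induction n as [|n IH]; simpl; [ring|]. rewrite <- IH. unfold Rdiv. ring.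
  - apply CV_mult; [apply infinite_sum_psum, H | apply Un_cv_const].
Qed.

Lemma infinite_sum_tail f l n :
  infinite_sum f l -> infinite_sum (fun j => f (n + j)%nat) (l - psum f n).
Proof.
  intros H. apply infinite_sum_psum.
  apply Un_cv_ext with (fun N => psum f (N + n) - psum f n).
  - intros N. induction N as [|N IH]; simpl; [ring|]. rewrite <- IH, (Nat.add_comm n N). ring.
  - apply CV_minus; [apply CV_shift', infinite_sum_psum, H | apply Un_cv_const].
Qed.

Lemma infinite_sum_finite f m : (forall k, (m <= k)%nat -> f k = 0) -> infinite_sum f (psum f m).
Proof.
  intros H. apply infinite_sum_psum. intros e He. exists m. intros n Hn.
  replace (psum f n) with (psum f m); [unfold Rdist; rewrite Rminus_diag, Rabs_R0; lra|].
  induction Hn as [|n Hn IH]; [reflexivity|]. simpl. rewrite <- IH, H by lia. ring.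
Qed.

Lemma infinite_sum_dominated f g l :
  (forall k, 0 <= g k <= f k) -> infinite_sum f l -> infinite_sum g (infsum g).
Proof.
  intros H Hf. destruct (Rseries_CV_comp g f H (exist _ l Hf)) as [lg Hg].
  rewrite (infsum_eq g lg Hg). exact Hg.
Qed.

Section NormalizedEigenvalues.
Variable lam : nat -> R.
Hypothesis hlam : eigen_seq lam.

Lemma Lambda_sum : 0 < Lambda lam /\ infinite_sum lam (Lambda lam).
Proof.
  destruct hlam as [Hnn [_ [Hlam0 [l Hl]]]]. unfold Lambda. rewrite (infsum_eq _ _ Hl).
  split; [|exact Hl]. pose proof (psum_le_infinite_sum lam l 1 Hnn Hl). simpl in *. lra.
Qed.

Lemma lbar_nonneg k : 0 <= lbar lam k.
Proof.
  destruct Lambda_sum as [HL _]. unfold lbar, Rdiv.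
  apply Rmult_le_pos; [apply hlam | left; apply Rinv_0_lt_compat, HL].
Qed.

Lemma lbar_nonincreasing j k : (j <= k)%nat -> lbar lam k <= lbar lam j.
Proof.
  destruct Lambda_sum as [HL _]. intros Hjk. induction Hjk as [|k _ IH]; [lra|].
  enough (lbar lam (S k) <= lbar lam k) by lra.
  unfold lbar, Rdiv. apply Rmult_le_compat_r; [left; apply Rinv_0_lt_compat, HL | apply hlam].
Qed.

Lemma lbar_sum : infinite_sum (lbar lam) 1.
Proof.
  destruct Lambda_sum as [HL Hsum]. rewrite <- (Rdiv_diag (Lambda lam)) by lra.
  exact (infinite_sum_div _ _ _ Hsum).
Qed.

Lemma psum_lbar_le_1 n : psum (lbar lam) n <= 1.
Proof. exact (psum_le_infinite_sum _ _ n lbar_nonneg lbar_sum). Qed.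

(* By monotonicity the first [k + 1] normalised eigenvalues are all at least [lbar lam k]. *)
Lemma lbar_index_bound t k : t <= lbar lam k -> INR (S k) * t <= 1.
Proof.
  intros Ht.
  assert (Hsum : forall n, (n <= S k)%nat -> INR n * t <= psum (lbar lam) n).
  { induction n as [|n IH]; intros Hn; simpl psum; [simpl; lra|].
    pose proof (lbar_nonincreasing n k ltac:(lia)). rewrite S_INR.
    specialize (IH ltac:(lia)). lra. }
  pose proof (Hsum (S k) (le_n _)). pose proof (psum_lbar_le_1 (S k)). lra.
Qed.

Lemma tailsum_eq n : tailsum lam n = 1 - psum (lbar lam) n.
Proof. apply infsum_eq, infinite_sum_tail, lbar_sum. Qed.

Lemma ncompl_spec eps : 0 < eps < 1 ->
  (1 <= ncompl lam eps)%nat /\ 1 - eps ^ 2 <= psum (lbar lam) (ncompl lam eps) /\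
  forall m, (1 <= m)%nat -> (m < ncompl lam eps)%nat -> psum (lbar lam) m < 1 - eps ^ 2.
Proof.
  intros Heps. assert (Heps2 : 0 < eps ^ 2) by (apply pow_lt; lra).
  set (P n := (1 <= n)%nat /\ tailsum lam n <= eps ^ 2).
  assert (HP : exists n, P n).
  { destruct (proj1 (infinite_sum_psum _ _) lbar_sum _ Heps2) as [N HN].
    exists (S N). split; [lia|]. rewrite tailsum_eq.
    specialize (HN (S N) ltac:(lia)). unfold Rdist in HN. apply Rabs_def2 in HN. lra. }
  destruct (dec_inh_nat_subset_has_unique_least_element P (fun n => classic (P n)) HP)
    as [n [[[Hn1 Hn2] Hleast] _]].
  assert (Hmin : forall m, (1 <= m)%nat -> (m < n)%nat -> eps ^ 2 < tailsum lam m).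
  { intros m Hm1 Hm2. apply Rnot_le_lt. intros Hm. specialize (Hleast m (conj Hm1 Hm)). lia. }
  assert (Hex : exists n, (1 <= n)%nat /\ tailsum lam n <= eps ^ 2 /\
    forall m, (1 <= m)%nat -> (m < n)%nat -> eps ^ 2 < tailsum lam m) by eauto.
  destruct (epsilon_spec (inhabits 0%nat) _ Hex) as [H1 [H2 H3]].
  fold (ncompl lam eps) in H1, H2, H3. rewrite tailsum_eq in H2.
  split; [exact H1|]. split; [lra|].
  intros m Hm1 Hm2. specialize (H3 m Hm1 Hm2). rewrite tailsum_eq in H3. lra.
Qed.

Lemma ncompl_pos eps : 0 < eps < 1 -> 0 < INR (ncompl lam eps).
Proof.
  intros Heps. apply lt_0_INR. destruct (ncompl_spec eps Heps) as [H _]. lia.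
Qed.

Definition lbar_above (t : R) (k : nat) : R :=
  lbar lam k * (if Rle_dec t (lbar lam k) then 1 else 0).

Definition mass_above (t : R) : R := infsum (lbar_above t).

Lemma lbar_above_bounds t k : 0 <= lbar_above t k <= lbar lam k.
Proof. unfold lbar_above. pose proof (lbar_nonneg k). destruct Rle_dec; lra. Qed.

Lemma mass_above_sum t : infinite_sum (lbar_above t) (mass_above t).
Proof. exact (infinite_sum_dominated _ _ _ (lbar_above_bounds t) lbar_sum). Qed.

Lemma mass_above_bounds t : 0 <= mass_above t <= 1.
Proof.
  split.
  - apply (infinite_sum_le (fun _ => 0) (lbar_above t)).
    + intros k. apply lbar_above_bounds.
    + exact (infinite_sum_finite (fun _ => 0) 0 (fun _ _ => eq_refl)).
    + apply mass_above_sum.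
  - apply (infinite_sum_le (lbar_above t) (lbar lam)).
    + intros k. apply lbar_above_bounds.
    + apply mass_above_sum.
    + apply lbar_sum.
Qed.

(* Each of the first [n] terms missing from [mass_above t] is smaller than [t]. *)
Lemma psum_le_mass_above t n : 0 <= t -> psum (lbar lam) n <= mass_above t + INR n * t.
Proof.
  intros Ht. assert (Hn : psum (lbar lam) n <= psum (lbar_above t) n + INR n * t).
  { induction n as [|n IH]; simpl psum; [simpl; lra|]. rewrite S_INR.
    assert (lbar lam n <= lbar_above t n + t) by (unfold lbar_above; destruct Rle_dec; lra).
    lra. }
  pose proof (psum_le_infinite_sum _ _ n (fun k => proj1 (lbar_above_bounds t k))
    (mass_above_sum t)). lra.
Qed.

Lemma mass_above_le_psum t m :
  (forall k, t <= lbar lam k -> (k < m)%nat) -> mass_above t <= psum (lbar lam) m.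
Proof.
  intros Hm.
  assert (Hsum : infinite_sum (lbar_above t) (psum (lbar_above t) m)).
  { apply infinite_sum_finite. intros k Hk. unfold lbar_above.
    destruct Rle_dec as [Ht|]; [specialize (Hm k Ht); lia | ring]. }
  unfold mass_above. rewrite (infsum_eq _ _ Hsum).
  apply psum_le. intros k. apply lbar_above_bounds.
Qed.

Lemma mass_above_ge_ncompl eps t : 0 < eps < 1 -> 0 <= t ->
  1 - eps ^ 2 - INR (ncompl lam eps) * t <= mass_above t.
Proof.
  intros Heps Ht. destruct (ncompl_spec eps Heps) as [_ [H _]].
  pose proof (psum_le_mass_above t (ncompl lam eps) Ht). lra.
Qed.

(* If [n t > 1], every index [k] with [lbar lam k >= t] satisfies [k + 1 < n], so
   [mass_above t] is at most the partial sum of [n - 1] terms, which by minimality of [n]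
   stays below [1 - eps ^ 2]. *)
Lemma ncompl_le_of_mass_above eps t : 0 < eps < 1 -> 0 < t ->
  1 - eps ^ 2 < mass_above t -> INR (ncompl lam eps) * t <= 1.
Proof.
  intros Heps Ht Hmass. apply Rnot_lt_le. intros Hn.
  set (n := ncompl lam eps) in *.
  destruct (ncompl_spec eps Heps) as [Hn1 [_ Hmin]]. fold n in Hn1, Hmin.
  assert (Hidx : forall k, t <= lbar lam k -> (k < n - 1)%nat).
  { intros k Hk. pose proof (lbar_index_bound t k Hk).
    assert (Hkn : INR (S k) < INR n) by (apply Rmult_lt_reg_r with t; lra).
    apply INR_lt in Hkn. lia. }
  pose proof (mass_above_le_psum t _ Hidx) as Hle.
  destruct (Nat.eq_dec (n - 1) 0) as [E|E].
  - rewrite E in Hle. simpl in Hle. assert (eps ^ 2 < 1) by (simpl; nra). lra.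
  - specialize (Hmin (n - 1)%nat ltac:(lia) ltac:(lia)). lra.
Qed.

End NormalizedEigenvalues.

Lemma GX_bounds lam a b x : eigen_seq lam -> 0 <= GX lam a b x <= 1.
Proof. intros hlam. exact (mass_above_bounds lam hlam (exp (- a - x * b))). Qed.

Lemma mult_exp_ln n r : 0 < n -> n * exp r = exp (ln n + r).
Proof. intros Hn. rewrite exp_plus, exp_ln by exact Hn. reflexivity. Qed.

Lemma GX_ge_exp lam a b x eps : eigen_seq lam -> 0 < eps < 1 ->
  1 - eps ^ 2 - exp (ln (INR (ncompl lam eps)) - a - x * b) <= GX lam a b x.
Proof.
  intros hlam Heps.
  replace (ln (INR (ncompl lam eps)) - a - x * b) with (ln (INR (ncompl lam eps)) + (- a - x * b))
    by ring.
  rewrite <- mult_exp_ln by (apply ncompl_pos; assumption).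
  apply mass_above_ge_ncompl; [exact hlam | exact Heps | left; apply exp_pos].
Qed.

Lemma ln_ncompl_le_of_GX lam a b x eps : eigen_seq lam -> 0 < eps < 1 ->
  1 - eps ^ 2 < GX lam a b x -> ln (INR (ncompl lam eps)) <= a + x * b.
Proof.
  intros hlam Heps HG.
  pose proof (ncompl_le_of_mass_above lam hlam eps _ Heps (exp_pos _) HG) as Hn.
  rewrite mult_exp_ln, <- exp_0 in Hn by (apply ncompl_pos; assumption).
  apply Rnot_lt_le. intros Hlt.
  assert (Hpos : 0 < ln (INR (ncompl lam eps)) + (- a - x * b)) by lra.
  apply exp_increasing in Hpos. lra.
Qed.

Lemma continuity_pt_eps_delta f c : continuity_pt f c <->
  forall e, 0 < e -> exists d, 0 < d /\ forall z, Rabs (z - c) < d -> Rabs (f z - f c) < e.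
Proof.
  split.
  - intros H e He. destruct (H e He) as [d [Hd Hz]]. exists d. split; [exact Hd|].
    intros z Hzc. destruct (Req_dec z c) as [->|Hne].
    + rewrite Rminus_diag, Rabs_R0. exact He.
    + apply (Hz z). split; [split; [exact I | auto] | exact Hzc].
  - intros H e He. destruct (H e He) as [d [Hd Hz]]. exists d. split; [exact Hd|].
    intros x [_ Hx]. apply Hz, Hx.
Qed.

Section MonotoneContinuityPoint.
Variables (f : R -> R) (u v : R).
Hypothesis huv : u < v.
Hypothesis hf : forall x y, u <= x -> x <= y -> y <= v -> f x <= f y.

(* Of the two subintervals [s + L/8, s + 3L/8] and [s + 5L/8, s + 7L/8] of [s, t], keep the
   one on which [f] increases less: by disjointness this is at most half of [f t - f s]. *)
Definition shrink (p : R * R) : R * R :=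
  let (s, t) := p in let L := t - s in
  if Rle_dec (f (s + 3 * L / 8) - f (s + L / 8)) (f (s + 7 * L / 8) - f (s + 5 * L / 8))
  then (s + L / 8, s + 3 * L / 8) else (s + 5 * L / 8, s + 7 * L / 8).

Fixpoint nested (n : nat) : R * R :=
  match n with O => (u, v) | S n => shrink (nested n) end.

Lemma shrink_spec s t : u <= s -> s < t -> t <= v ->
  s + (t - s) / 8 <= fst (shrink (s, t)) /\ fst (shrink (s, t)) < snd (shrink (s, t)) /\
  snd (shrink (s, t)) <= t - (t - s) / 8 /\
  2 * (f (snd (shrink (s, t))) - f (fst (shrink (s, t)))) <= f t - f s.
Proof.
  intros Hs Hst Ht. unfold shrink.
  assert (f s <= f (s + (t - s) / 8)) by (apply hf; lra).
  assert (f (s + 3 * (t - s) / 8) <= f (s + 5 * (t - s) / 8)) by (apply hf; lra).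
  assert (f (s + 7 * (t - s) / 8) <= f t) by (apply hf; lra).
  destruct Rle_dec; simpl; repeat split; lra.
Qed.

Lemma nested_spec n :
  u <= fst (nested n) /\ fst (nested n) < snd (nested n) /\ snd (nested n) <= v /\
  2 ^ n * (f (snd (nested n)) - f (fst (nested n))) <= f v - f u.
Proof.
  induction n as [|n IH]; simpl; [lra|].
  destruct (nested n) as [s t]. simpl in IH. destruct IH as [H1 [H2 [H3 H4]]].
  destruct (shrink_spec s t H1 H2 H3) as [S1 [S2 [S3 S4]]].
  pose proof (pow_lt 2 n ltac:(lra)). repeat split; try lra. nra.
Qed.

Lemma nested_margin n :
  fst (nested n) + (snd (nested n) - fst (nested n)) / 8 <= fst (nested (S n)) /\
  snd (nested (S n)) <= snd (nested n) - (snd (nested n) - fst (nested n)) / 8.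
Proof.
  destruct (nested_spec n) as [H1 [H2 [H3 _]]]. change (nested (S n)) with (shrink (nested n)).
  destruct (nested n) as [s t]. simpl in H1, H2, H3.
  destruct (shrink_spec s t H1 H2 H3) as [S1 [_ [S3 _]]]. cbn [fst snd]. lra.
Qed.

Lemma nested_mono m n : (m <= n)%nat ->
  fst (nested m) <= fst (nested n) /\ snd (nested n) <= snd (nested m).
Proof.
  intros Hmn. induction Hmn as [|n _ IH]; [lra|].
  pose proof (nested_margin n). pose proof (nested_spec n). lra.
Qed.

Lemma nested_common_point : exists c, forall n, fst (nested n) <= c <= snd (nested n).
Proof.
  set (E x := exists n, x = fst (nested n)).
  assert (Hb : bound E).
  { exists v. intros x [n ->]. pose proof (nested_spec n). lra. }
  destruct (completeness E Hb (ex_intro _ u (ex_intro _ 0%nat eq_refl))) as [c [Hub Hlub]].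
  exists c. intros n. split.
  - apply Hub. exists n. reflexivity.
  - apply Hlub. intros x [m ->].
    pose proof (nested_mono m (max m n) (Nat.le_max_l _ _)).
    pose proof (nested_mono n (max m n) (Nat.le_max_r _ _)).
    pose proof (nested_spec (max m n)). lra.
Qed.

Lemma monotone_continuity_point : exists c, u < c < v /\ continuity_pt f c.
Proof.
  destruct nested_common_point as [c Hc]. exists c. split.
  { pose proof (nested_margin 0). pose proof (Hc 1%nat). simpl in *. lra. }
  apply continuity_pt_eps_delta. intros e He.
  destruct (Pow_x_infinity 2 ltac:(rewrite Rabs_right; lra) ((f v - f u) / e + 1))
    as [n Hn].
  specialize (Hn n (le_n n)). rewrite Rabs_right in Hn by (left; apply pow_lt; lra).
  destruct (nested_spec n) as [H1 [H2 [H3 H4]]].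
  destruct (nested_margin n) as [M1 M2]. pose proof (Hc (S n)) as HcS.
  set (s := fst (nested n)) in *. set (t := snd (nested n)) in *.
  assert (Hvar : f t - f s < e).
  { assert (Huv : f u <= f v) by (apply hf; lra).
    assert (Hq : (f v - f u) / e * e = f v - f u) by (field; lra).
    pose proof (pow_lt 2 n ltac:(lra)). nra. }
  exists ((t - s) / 8). split; [lra|]. intros z Hz. apply Rabs_def2 in Hz.
  assert (f s <= f z <= f t) by (split; apply hf; lra).
  assert (f s <= f c <= f t) by (split; apply hf; lra).
  apply Rabs_def1; lra.
Qed.

End MonotoneContinuityPoint.

Lemma nonincreasing_continuity_point (g : R -> R) u v : u < v ->
  (forall x y, u <= x -> x <= y -> y <= v -> g y <= g x) ->
  exists c, u < c < v /\ continuity_pt g c.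
Proof.
  intros huv hg.
  destruct (monotone_continuity_point (fun z => - g z) u v huv) as [c [Hc Hcont]].
  { intros x y Hx Hxy Hy. apply Ropp_le_contravar, hg; assumption. }
  exists c. split; [exact Hc|].
  apply (continuity_pt_locally_ext (opp_fct (fun z => - g z)) g 1); [lra| |].
  - intros y _. unfold opp_fct. ring.
  - apply continuity_pt_opp, Hcont.
Qed.

Section GeneralizedInverse.
Variable G : R -> R.
Hypothesis hG : distribution_function G.

Lemma geninv_glb y : 0 < y < 1 -> is_glb (fun x => y <= G x) (geninv G y).
Proof.
  intros Hy. destruct hG as [_ [_ [_ [Hm Hp]]]].
  unfold geninv. apply epsilon_spec.
  destruct (Hp (1 - y) ltac:(lra)) as [M1 HM1]. destruct (Hm y ltac:(lra)) as [M0 HM0].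
  set (E w := y <= G (- w)).
  assert (Hb : bound E).
  { exists (- M0). intros w Hw. destruct (Rle_dec (- w) M0) as [Hle|]; [|lra].
    specialize (HM0 _ Hle). unfold E in Hw. apply Rabs_def2 in HM0. lra. }
  assert (Hne : exists w, E w).
  { exists (- M1). unfold E. rewrite Ropp_involutive.
    specialize (HM1 M1 (Rle_refl _)). apply Rabs_def2 in HM1. lra. }
  destruct (completeness E Hb Hne) as [m [Hub Hlub]].
  exists (- m). split.
  - intros x Hx. enough (- x <= m) by lra. apply Hub. unfold E. rewrite Ropp_involutive. exact Hx.
  - intros m' Hm'. enough (m <= - m') by lra. apply Hlub. intros w Hw. specialize (Hm' _ Hw). lra.
Qed.

(* The Galois connection of the quantile function; the direction [->] uses right-continuity. *)
Lemma geninv_le_iff y z : 0 < y < 1 -> geninv G y <= z <-> y <= G z.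
Proof.
  intros Hy. destruct (geninv_glb y Hy) as [Hlow Hgreat]. split; [|apply Hlow].
  intros Hz. apply Rnot_lt_le. intros HGz.
  destruct hG as [Hmono [_ [Hright _]]].
  destruct (Hright z (y - G z) ltac:(lra)) as [d [Hd Hd']].
  assert (Hw : exists w, y <= G w /\ w < z + d).
  { apply NNPP. intros Hno. enough (z + d <= geninv G y) by lra.
    apply Hgreat. intros w Hw. apply Rnot_lt_le. intros Hwz. apply Hno. eauto. }
  destruct Hw as [w [Hw Hwz]].
  specialize (Hd' (Rmax z w) ltac:(split; [apply Rmax_l | apply Rmax_lub_lt; lra])).
  pose proof (Hmono w (Rmax z w) (Rmax_r _ _)). apply Rabs_def2 in Hd'. lra.
Qed.

End GeneralizedInverse.

Lemma Un_cv_div_0_iff (X b : nat -> R) : (forall d, 0 < b d) ->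
  Un_cv (fun d => X d / b d) 0 <->
  forall δ, 0 < δ -> eventually (fun d => Rabs (X d) < δ * b d).
Proof.
  intros hb. assert (Hdiv : forall d, Rdist (X d / b d) 0 = Rabs (X d) / b d).
  { intros d. unfold Rdist, Rdiv. rewrite Rminus_0_r, Rabs_mult, Rabs_inv.
    rewrite (Rabs_pos_eq (b d)) by (left; apply hb). reflexivity. }
  split; intros H δ Hδ; destruct (H δ Hδ) as [N HN]; exists N; intros d Hd;
    specialize (HN d Hd); specialize (hb d).
  - rewrite Hdiv in HN. apply Rmult_lt_reg_r with (/ b d); [apply Rinv_0_lt_compat, hb|].
    rewrite Rmult_assoc, Rinv_r, Rmult_1_r by lra. exact HN.
  - rewrite Hdiv. apply Rmult_lt_reg_r with (b d); [exact hb|].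
    unfold Rdiv. rewrite Rmult_assoc, Rinv_l, Rmult_1_r by lra. exact HN.
Qed.

Lemma Un_cv_of_eventually_bounds (u : nat -> R) l :
  (forall e, 0 < e -> eventually (fun d => l - e < u d)) ->
  (forall e, 0 < e -> eventually (fun d => u d < l + e)) -> Un_cv u l.
Proof.
  intros Hlo Hup e He. destruct (filter_and _ _ (Hlo e He) (Hup e He)) as [N HN].
  exists N. intros d Hd. destruct (HN d Hd). unfold Rdist. apply Rabs_def1; lra.
Qed.

Section Quantiles.
Variables (q G : R -> R).
Hypothesis hq : forall e1 e2, 0 < e1 -> e1 <= e2 -> e2 < 1 -> q e2 <= q e1.
Hypothesis hG : distribution_function G.
Hypothesis hqG : forall eps, Cq q eps -> q eps = geninv G (1 - eps ^ 2).

Lemma Cq_dense u v : 0 < u -> u < v -> v < 1 -> exists eps, u < eps < v /\ Cq q eps.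
Proof.
  intros Hu Huv Hv.
  destruct (nonincreasing_continuity_point q u v Huv) as [c [Hc Hcont]].
  { intros x y Hx Hxy Hy. apply hq; lra. }
  exists c. repeat split; (lra || exact Hcont).
Qed.

Lemma G_continuity_point u v : u < v -> exists x, u < x < v /\ continuity_pt G x.
Proof.
  intros Huv. apply monotone_continuity_point; [exact Huv|].
  intros x y _ Hxy _. apply hG, Hxy.
Qed.

Lemma Cq_level_between L U : 0 <= L -> L < U -> U <= 1 ->
  exists eps, Cq q eps /\ L < 1 - eps ^ 2 < U.
Proof.
  intros HL HLU HU.
  set (u := sqrt (1 - U)). set (v := sqrt (1 - L)).
  assert (Hu : 0 <= u) by apply sqrt_pos.
  assert (Huv : u < v) by (apply sqrt_lt_1; lra).
  assert (Hv : v <= 1) by (rewrite <- sqrt_1; apply sqrt_le_1; lra).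
  assert (Eu : u * u = 1 - U) by (apply sqrt_sqrt; lra).
  assert (Ev : v * v = 1 - L) by (apply sqrt_sqrt; lra).
  (* Shrinking to the middle third keeps [eps] inside (0, 1) also when [U = 1] or [L = 0]. *)
  destruct (Cq_dense ((2 * u + v) / 3) ((u + 2 * v) / 3)) as [eps [He Hc]]; try lra.
  exists eps. split; [exact Hc|]. simpl. split; nra.
Qed.

Lemma Cq_level eps : Cq q eps -> 0 < 1 - eps ^ 2 < 1.
Proof. intros [Heps _]. simpl. split; nra. Qed.

Lemma quantile_le_iff eps z : Cq q eps -> q eps <= z <-> 1 - eps ^ 2 <= G z.
Proof. intros Hc. rewrite (hqG eps Hc). apply geninv_le_iff, Cq_level, Hc. exact hG. Qed.

Lemma quantile_lt eps x : Cq q eps -> continuity_pt G x -> 1 - eps ^ 2 < G x -> q eps < x.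
Proof.
  intros Hc Hx HGx.
  destruct (proj1 (continuity_pt_eps_delta G x) Hx (G x - (1 - eps ^ 2)) ltac:(lra))
    as [d [Hd Hz]].
  specialize (Hz (x - d / 2) ltac:(rewrite Rabs_left; lra)). apply Rabs_def2 in Hz.
  enough (q eps <= x - d / 2) by lra. apply quantile_le_iff; [exact Hc | lra].
Qed.

Lemma lt_quantile eps x : Cq q eps -> continuity_pt G x -> G x < 1 - eps ^ 2 -> x < q eps.
Proof.
  intros Hc Hx HGx.
  destruct (proj1 (continuity_pt_eps_delta G x) Hx (1 - eps ^ 2 - G x) ltac:(lra))
    as [d [Hd Hz]].
  specialize (Hz (x + d / 2) ltac:(rewrite Rabs_right; lra)). apply Rabs_def2 in Hz.
  enough (x + d / 2 < q eps) by lra. apply Rnot_le_lt. intros Hle.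
  apply (quantile_le_iff eps _ Hc) in Hle. lra.
Qed.

(* A slightly smaller level [eps' < eps] has quantile [q eps' < q eps + δ] by continuity of
   [q] at [eps], and [G] exceeds the level [1 - eps ^ 2] right after [q eps']. *)
Lemma continuity_point_above_quantile eps δ : Cq q eps -> 0 < δ ->
  exists x, continuity_pt G x /\ x < q eps + δ /\ 1 - eps ^ 2 < G x.
Proof.
  intros Hc Hδ. pose proof Hc as [Heps Hqc].
  destruct (proj1 (continuity_pt_eps_delta q eps) Hqc δ Hδ) as [η [Hη Hq]].
  pose proof (Rmax_l (eps / 2) (eps - η / 2)). pose proof (Rmax_r (eps / 2) (eps - η / 2)).
  destruct (Cq_dense (Rmax (eps / 2) (eps - η / 2)) eps) as [eps' [He' Hc']];
    [lra | apply Rmax_lub_lt; lra | lra |].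
  specialize (Hq eps' ltac:(rewrite Rabs_left; lra)). apply Rabs_def2 in Hq.
  destruct (G_continuity_point (q eps') (q eps + δ)) as [x [Hx Hcont]]; [lra|].
  exists x. split; [exact Hcont|]. split; [lra|].
  assert (HGx : 1 - eps' ^ 2 <= G x) by (apply quantile_le_iff; [exact Hc' | lra]).
  destruct Hc' as [Heps' _]. simpl in *. nra.
Qed.

Lemma continuity_point_below_quantile eps δ : Cq q eps -> 0 < δ ->
  exists x, continuity_pt G x /\ q eps - δ < x /\ G x < 1 - eps ^ 2.
Proof.
  intros Hc Hδ. destruct (G_continuity_point (q eps - δ) (q eps)) as [x [Hx Hcont]]; [lra|].
  exists x. split; [exact Hcont|]. split; [lra|].
  apply Rnot_le_lt. intros HGx. apply (quantile_le_iff eps x Hc) in HGx. lra.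
Qed.

End Quantiles.

Section Asymptotics.
Variables (lam : nat -> nat -> R) (a b : nat -> R) (q G : R -> R).
Hypothesis hlam : forall d, eigen_seq (lam d).
Hypothesis hb : forall d, 0 < b d.
Hypothesis hbinf : cv_infty b.
Hypothesis hq : forall e1 e2, 0 < e1 -> e1 <= e2 -> e2 < 1 -> q e2 <= q e1.
Hypothesis hG : distribution_function G.
Hypothesis hqG : forall eps, Cq q eps -> q eps = geninv G (1 - eps ^ 2).

Section FromComplexityAsymptotics.
Hypothesis hasym : forall eps, Cq q eps ->
  Un_cv (fun d => (ln (INR (ncompl (lam d) eps)) - a d - q eps * b d) / b d) 0.

(* Off the quantile [q eps] the term [(q eps - x) b d] dominates the [o (b d)] error. *)
Lemma exponent_eventually_lt eps x C : Cq q eps -> q eps < x ->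
  eventually (fun d => ln (INR (ncompl (lam d) eps)) - a d - x * b d < C).
Proof.
  intros Hc Hx. set (δ := (x - q eps) / 2).
  assert (Hδ : 0 < δ) by (unfold δ; lra).
  apply (filter_imp (fun d =>
    Rabs (ln (INR (ncompl (lam d) eps)) - a d - q eps * b d) < δ * b d /\ - C / δ < b d)).
  - intros d [H1 H2]. apply Rabs_def2 in H1.
    assert (δ * (- C / δ) = - C) by (field; lra). unfold δ in *. nra.
  - apply filter_and; [exact (proj1 (Un_cv_div_0_iff _ b hb) (hasym eps Hc) δ Hδ) | apply hbinf].
Qed.

Lemma exponent_eventually_gt eps x C : Cq q eps -> x < q eps ->
  eventually (fun d => C < ln (INR (ncompl (lam d) eps)) - a d - x * b d).
Proof.
  intros Hc Hx. set (δ := (q eps - x) / 2).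
  assert (Hδ : 0 < δ) by (unfold δ; lra).
  apply (filter_imp (fun d =>
    Rabs (ln (INR (ncompl (lam d) eps)) - a d - q eps * b d) < δ * b d /\ C / δ < b d)).
  - intros d [H1 H2]. apply Rabs_def2 in H1.
    assert (δ * (C / δ) = C) by (field; lra). unfold δ in *. nra.
  - apply filter_and; [exact (proj1 (Un_cv_div_0_iff _ b hb) (hasym eps Hc) δ Hδ) | apply hbinf].
Qed.

Lemma GX_eventually_gt x e : continuity_pt G x -> 0 < e ->
  eventually (fun d => G x - e < GX (lam d) (a d) (b d) x).
Proof.
  intros Hx He. destruct (Rlt_le_dec (G x - e) 0) as [Hneg|Hnn].
  { apply filter_forall. intros d. pose proof (GX_bounds (lam d) (a d) (b d) x (hlam d)). lra. }
  destruct (Cq_level_between q hq (G x - e) (G x)) as [eps [Hc Hlev]]; [lra | lra | apply hG|].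
  set (c := 1 - eps ^ 2 - (G x - e)).
  apply (filter_imp (fun d => ln (INR (ncompl (lam d) eps)) - a d - x * b d < ln c)).
  - intros d Hd. apply exp_increasing in Hd. rewrite exp_ln in Hd by (unfold c; lra).
    pose proof (GX_ge_exp (lam d) (a d) (b d) x eps (hlam d) (proj1 Hc)). unfold c in *. lra.
  - apply exponent_eventually_lt; [exact Hc|].
    apply (quantile_lt q G hG hqG); [exact Hc | exact Hx | lra].
Qed.

Lemma GX_eventually_lt x e : continuity_pt G x -> 0 < e ->
  eventually (fun d => GX (lam d) (a d) (b d) x < G x + e).
Proof.
  intros Hx He. destruct (Rlt_le_dec 1 (G x + e)) as [Hbig|Hsmall].
  { apply filter_forall. intros d. pose proof (GX_bounds (lam d) (a d) (b d) x (hlam d)). lra. }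
  destruct (Cq_level_between q hq (G x) (G x + e)) as [eps [Hc Hlev]]; [apply hG | lra | lra|].
  apply (filter_imp (fun d => 0 < ln (INR (ncompl (lam d) eps)) - a d - x * b d)).
  - intros d Hd. apply Rnot_le_lt. intros HGX.
    assert (HGX' : 1 - eps ^ 2 < GX (lam d) (a d) (b d) x) by lra.
    pose proof (ln_ncompl_le_of_GX _ _ _ _ _ (hlam d) (proj1 Hc) HGX'). lra.
  - apply exponent_eventually_gt; [exact Hc|].
    apply (lt_quantile q G hG hqG); [exact Hc | exact Hx | lra].
Qed.

End FromComplexityAsymptotics.

Section FromWeakConvergence.
Hypothesis hweak : forall x, continuity_pt G x ->
  Un_cv (fun d => GX (lam d) (a d) (b d) x) (G x).

Lemma ln_ncompl_eventually_upper eps δ : Cq q eps -> 0 < δ ->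
  eventually (fun d => ln (INR (ncompl (lam d) eps)) - a d - q eps * b d < δ * b d).
Proof.
  intros Hc Hδ.
  destruct (continuity_point_above_quantile q G hq hG hqG eps δ Hc Hδ) as [x [Hx [Hxq HGx]]].
  apply (filter_imp (fun d => Rdist (GX (lam d) (a d) (b d) x) (G x) < G x - (1 - eps ^ 2))).
  - intros d Hd. unfold Rdist in Hd. apply Rabs_def2 in Hd.
    pose proof (ln_ncompl_le_of_GX (lam d) (a d) (b d) x eps (hlam d) (proj1 Hc) ltac:(lra)).
    pose proof (hb d). nra.
  - apply hweak; [exact Hx | lra].
Qed.

Lemma ln_ncompl_eventually_lower eps δ : Cq q eps -> 0 < δ ->
  eventually (fun d => - (δ * b d) < ln (INR (ncompl (lam d) eps)) - a d - q eps * b d).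
Proof.
  intros Hc Hδ.
  destruct (continuity_point_below_quantile q G hG hqG eps (δ / 2) Hc ltac:(lra))
    as [x [Hx [Hxq HGx]]].
  set (c := (1 - eps ^ 2 - G x) / 2).
  apply (filter_imp (fun d => Rdist (GX (lam d) (a d) (b d) x) (G x) < c /\
                              - 2 * ln c / δ < b d)).
  - intros d [H1 H2]. unfold Rdist in H1. apply Rabs_def2 in H1.
    pose proof (GX_ge_exp (lam d) (a d) (b d) x eps (hlam d) (proj1 Hc)) as Hge.
    assert (Hexp : ln c < ln (INR (ncompl (lam d) eps)) - a d - x * b d).
    { rewrite <- (ln_exp (_ - _ - _)). apply ln_increasing; unfold c in *; lra. }
    assert (δ * (- 2 * ln c / δ) = - 2 * ln c) by (field; lra).
    pose proof (hb d). nra.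
  - apply filter_and; [apply hweak; [exact Hx | unfold c; lra] | apply hbinf].
Qed.

End FromWeakConvergence.
End Asymptotics.

Theorem theorem1
  (lam : nat -> nat -> R) (hlam : forall d, eigen_seq (lam d))
  (a b : nat -> R) (hb : forall d, 0 < b d) (hbinf : cv_infty b)
  (q : R -> R)
  (hq : forall e1 e2, 0 < e1 -> e1 <= e2 -> e2 < 1 -> q e2 <= q e1)
  (G : R -> R) (hG : distribution_function G)
  (hqG : forall eps, Cq q eps -> q eps = geninv G (1 - eps ^ 2)) :
  (forall eps, Cq q eps ->
     Un_cv (fun d => (ln (INR (ncompl (lam d) eps)) - a d - q eps * b d) / b d) 0)
  <->
  (forall x, continuity_pt G x ->
     Un_cv (fun d => GX (lam d) (a d) (b d) x) (G x)).
Proof.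
  split.
  - intros hasym x Hx. apply Un_cv_of_eventually_bounds; intros e He.
    + eapply GX_eventually_gt; eauto.
    + eapply GX_eventually_lt; eauto.
  - intros hweak eps Hc. apply Un_cv_div_0_iff; [exact hb|]. intros δ Hδ.
    apply (filter_imp (fun d =>
      ln (INR (ncompl (lam d) eps)) - a d - q eps * b d < δ * b d /\
      - (δ * b d) < ln (INR (ncompl (lam d) eps)) - a d - q eps * b d)).
    + intros d [Hup Hlo]. apply Rabs_def1; assumption.
    + apply filter_and.
      * eapply ln_ncompl_eventually_upper; eauto.
      * eapply ln_ncompl_eventually_lower; eauto.
Qed.
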